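(* Let $p \geq 5$ and let $L$ be the Laplacian of the graph $K_p \oplus C_\infty$. Let $E_K \subset l^2$ be the span of the vectors $e_{-1}-e_{-k}$, $k = 2,\ldots,p-1$ (equivalently, the set of $v \in l^2$ supported on $\{-p+1,\ldots,-1\}$ with $\sum_{j=-p+1}^{-1} v_j = 0$), and let $E_K^\perp$ be its orthogonal complement in $l^2$. For $\lambda > 4$ set $$\sigma_+(\lambda) = \tfrac12\Big[(2-\lambda) + \sqrt{(2-\lambda)^2-4}\Big], \qquad F(\lambda) = (1-\lambda)\sigma_+(\lambda) - (p-\lambda)(1-\lambda) + (p-1).$$ Then $\lambda > 4$ is an eigenvalue of $L$ with a corresponding eigenvector $v \in l^2 \cap E_K^\perp$ if and only if $F(\lambda) = 0$. Furthermore, $F(\lambda)=0$ has exactly one solution in $(p,p+2)$ and no solutions in $(4,p] \cup [p+2,+\infty)$.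
   Context: The graph $K_p \oplus C_\infty$ has vertex set $\{-p+1,\ldots,0\} \cup \{1,2,3,\ldots\}$, with edges between every pair of distinct vertices in $\{-p+1,\ldots,0\}$, the edge $\{0,1\}$, and the edges $\{j,j+1\}$ for all $j \geq 1$. $l^2$ is the real Hilbert space of square-summable real functions on the vertex set, with the standard inner product; $e_j$ is the indicator vector of vertex $j$. The Laplacian acts by $(Lv)_i = \deg(i)\, v_i - \sum_{j \sim i} v_j$. An eigenvalue with eigenvector $v \in l^2$, $v \neq 0$, means $Lv = \lambda v$. *)

From Stdlib Require Import Reals Lra ZArith List Bool.
From Coquelicot Require Import Coquelicot.
Open Scope R_scope.

(* Vertices of K_p (+) C_oo are the integers i with 1 - p <= i.
   A real function on the vertex set is represented as v : Z -> R,
   required to vanish off the vertex set. *)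

Definition zrange (a b : Z) : list Z :=
  map (fun k => (a + Z.of_nat k)%Z) (seq 0 (Z.to_nat (b - a + 1))).

Definition adjb (p : nat) (i j : Z) : bool :=
  let lo := (1 - Z.of_nat p)%Z in
  (((lo <=? i)%Z && (i <=? 0)%Z && (lo <=? j)%Z && (j <=? 0)%Z && negb (i =? j)%Z)
  || ((i =? 0)%Z && (j =? 1)%Z) || ((i =? 1)%Z && (j =? 0)%Z)
  || ((1 <=? i)%Z && (j =? i + 1)%Z) || ((1 <=? j)%Z && (i =? j + 1)%Z))%bool.

(* all neighbours of i lie in this finite window *)
Definition window (p : nat) (i : Z) : list Z :=
  zrange (1 - Z.of_nat p) (Z.max 1 i + 1).

Definition nbrs (p : nat) (i : Z) : list Z := filter (adjb p i) (window p i).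

Definition deg (p : nat) (i : Z) : nat := length (nbrs p i).

Definition Lap (p : nat) (v : Z -> R) (i : Z) : R :=
  INR (deg p i) * v i - fold_right Rplus 0 (map v (nbrs p i)).

Definition is_vertex (p : nat) (i : Z) : Prop := (1 - Z.of_nat p <= i)%Z.

Definition vtx (p : nat) (n : nat) : Z := (1 - Z.of_nat p + Z.of_nat n)%Z.

Definition l2 (p : nat) (v : Z -> R) : Prop :=
  (forall i, ~ is_vertex p i -> v i = 0) /\
  ex_series (fun n => (v (vtx p n))^2).

Definition inner (p : nat) (v w : Z -> R) : R :=
  Series (fun n => v (vtx p n) * w (vtx p n)).

Definition in_EK (p : nat) (w : Z -> R) : Prop :=
  l2 p w /\
  (forall i, ~ (1 - Z.of_nat p <= i <= -1)%Z -> w i = 0) /\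
  fold_right Rplus 0 (map w (zrange (1 - Z.of_nat p) (-1))) = 0.

Definition in_EK_perp (p : nat) (v : Z -> R) : Prop :=
  l2 p v /\ forall w, in_EK p w -> inner p v w = 0.

Definition eig_EKperp (p : nat) (lam : R) : Prop :=
  exists v : Z -> R,
    l2 p v /\ (exists i, v i <> 0) /\ in_EK_perp p v /\
    forall i, is_vertex p i -> Lap p v i = lam * v i.

Definition sigma_plus (lam : R) : R :=
  ((2 - lam) + sqrt ((2 - lam)^2 - 4)) / 2.

Definition Ffun (p : nat) (lam : R) : R :=
  (1 - lam) * sigma_plus lam - (INR p - lam) * (1 - lam) + (INR p - 1).

(* An eigenvector orthogonal to E_K is constant, say [a], on the clique vertices -p+1..-1
   (pair it with e_{-1} - e_k).  The eigen-equations then say v_0 = (1 - lam) a, give one balance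
   equation at the hub 0, and v_{n+2} = (2 - lam) v_{n+1} - v_n along the path.  The characteristic
   roots sigma_plus, sigma_minus of this recurrence have product 1 and sigma_minus < -1 for
   lam > 4, so square-summability forces v_{n+1} = sigma_plus v_n; the hub equation becomes
   F(lam) a = 0, and a = 0 would kill v.  Conversely a = 1, v_n = (1 - lam) sigma_plus^n is an
   eigenvector when F(lam) = 0.  Since sigma_plus is increasing with values in [-1, 0), F is
   positive on (4, p], negative on [p + 2, oo) and strictly decreasing on [p, oo). *)

From Stdlib Require Import Reals ZArith.
From Coquelicot Require Import Coquelicot.
From Stdlib Require Import Lra Lia List Bool.
Open Scope R_scope.

Definition zsum (l : list Z) (g : Z -> R) : R := fold_right Rplus 0 (map g l).

Lemma zsum_app l1 l2 g : zsum (l1 ++ l2) g = zsum l1 g + zsum l2 g.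
Proof. unfold zsum. induction l1 as [|x l1 IH]; simpl; [lra|]. rewrite IH; lra. Qed.

Lemma zsum_ext l f g : (forall x, In x l -> f x = g x) -> zsum l f = zsum l g.
Proof.
  unfold zsum. induction l as [|x l IH]; intros H; simpl; [lra|].
  rewrite H by (simpl; auto). rewrite IH by (intros; apply H; simpl; auto). reflexivity.
Qed.

Lemma zsum_const l g c : (forall x, In x l -> g x = c) -> zsum l g = INR (length l) * c.
Proof.
  unfold zsum. induction l as [|x l IH]; intros H; cbn [map fold_right length]; [simpl; lra|].
  rewrite H by (simpl; auto). rewrite IH by (intros; apply H; simpl; auto). rewrite S_INR. lra.
Qed.

Lemma zsum_minus l f g : zsum l (fun x => f x - g x) = zsum l f - zsum l g.
Proof. unfold zsum. induction l as [|x l IH]; simpl; [lra|]. rewrite IH; lra. Qed.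

Lemma zsum_scal_l l c g : zsum l (fun x => c * g x) = c * zsum l g.
Proof. unfold zsum. induction l as [|x l IH]; simpl; [lra|]. rewrite IH; lra. Qed.

Lemma zrange_nil a b : (b < a)%Z -> zrange a b = nil.
Proof. intros. unfold zrange. replace (Z.to_nat (b - a + 1)) with 0%nat by lia. reflexivity. Qed.

Lemma zrange_cons a b : (a <= b)%Z -> zrange a b = a :: zrange (a + 1) b.
Proof.
  intros. unfold zrange.
  replace (Z.to_nat (b - a + 1)) with (S (Z.to_nat (b - (a + 1) + 1))) by lia.
  simpl. f_equal; [lia|].
  rewrite <- seq_shift, map_map. apply map_ext. intros; lia.
Qed.

Lemma length_zrange a b : length (zrange a b) = Z.to_nat (b - a + 1).
Proof. unfold zrange. rewrite length_map, length_seq. reflexivity. Qed.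

Lemma in_zrange a b x : In x (zrange a b) -> (a <= x <= b)%Z.
Proof. unfold zrange. rewrite in_map_iff. intros [k [<- Hk]]. apply in_seq in Hk. lia. Qed.

Lemma zrange_split a b m : (a <= m <= b + 1)%Z -> zrange a b = zrange a (m - 1) ++ zrange m b.
Proof.
  remember (Z.to_nat (m - a)) as n eqn:Hn. revert a Hn.
  induction n as [|n IH]; intros a Hn Hm.
  - replace m with a by lia. rewrite (zrange_nil a (a - 1)) by lia. reflexivity.
  - rewrite (zrange_cons a b), (zrange_cons a (m - 1)) by lia.
    simpl. f_equal. apply IH; lia.
Qed.

Definition zdelta (k j : Z) : R := if Z.eqb j k then 1 else 0.

Lemma zsum_mul_zdelta a b k f : (a <= k <= b)%Z ->
  zsum (zrange a b) (fun j => f j * zdelta k j) = f k.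
Proof.
  intros Hk. rewrite (zrange_split a b k), (zrange_cons k b) by lia.
  rewrite zsum_app. cbn [zsum map fold_right]. unfold zdelta at 2. rewrite Z.eqb_refl.
  fold (zsum (zrange (k + 1) b) (fun j => f j * zdelta k j)).
  rewrite !(zsum_const _ _ 0); [lra| |];
    intros j Hj; apply in_zrange in Hj; unfold zdelta;
    destruct (Z.eqb_spec j k); try lia; ring.
Qed.

Lemma Lap_zsum p v i :
  Lap p v i = zsum (window p i) (fun j => if adjb p i j then v i - v j else 0).
Proof.
  unfold Lap, deg, nbrs, zsum. induction (window p i) as [|j l IH]; simpl; [lra|].
  destruct (adjb p i j); cbn [filter map fold_right length]; rewrite <- IH;
    try rewrite S_INR; lra.
Qed.

Lemma adjbP p i j : adjb p i j = true <->
  ((1 - Z.of_nat p <= i <= 0 /\ 1 - Z.of_nat p <= j <= 0 /\ i <> j)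
   \/ (i = 0 /\ j = 1) \/ (i = 1 /\ j = 0) \/ (1 <= i /\ j = i + 1) \/ (1 <= j /\ i = j + 1))%Z.
Proof.
  unfold adjb.
  rewrite !orb_true_iff, !andb_true_iff, negb_true_iff, !Z.leb_le, !Z.eqb_eq, Z.eqb_neq.
  tauto.
Qed.

Ltac adjb_decide :=
  match goal with
  | |- context [adjb ?p ?i ?j] =>
      let E := fresh in
      destruct (adjb p i j) eqn:E;
      [apply adjbP in E | rewrite <- not_true_iff_false, adjbP in E]; try lia; try reflexivity
  end.

Lemma window_low p i : (1 <= p)%nat -> (i <= 1)%Z ->
  window p i = zrange (1 - Z.of_nat p) (-1) ++ (0 :: 1 :: 2 :: nil)%Z.
Proof.
  intros. unfold window. rewrite Z.max_l by lia.
  rewrite (zrange_split _ _ 0) by lia. reflexivity.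
Qed.

Lemma window_high p i : (1 <= p)%nat -> (1 <= i)%Z ->
  window p i = zrange (1 - Z.of_nat p) (i - 2) ++ (i - 1 :: i :: i + 1 :: nil)%Z.
Proof.
  intros. unfold window. rewrite Z.max_r by lia.
  rewrite (zrange_split _ _ (i - 1)) by lia.
  replace (i - 1 - 1)%Z with (i - 2)%Z by lia. f_equal.
  rewrite !zrange_cons, zrange_nil by lia. repeat f_equal; lia.
Qed.

Section LaplacianAtVertex.
Variable p : nat.
Hypothesis p_pos : (1 <= p)%nat.
Variable v : Z -> R.

Lemma Lap_clique i : (1 - Z.of_nat p <= i <= -1)%Z ->
  Lap p v i = zsum (zrange (1 - Z.of_nat p) (-1)) (fun j => v i - v j) + (v i - v 0%Z).
Proof.
  intros Hi. rewrite Lap_zsum, window_low, zsum_app by lia. f_equal.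
  - apply zsum_ext. intros j Hj. apply in_zrange in Hj.
    destruct (Z.eq_dec j i) as [->|]; adjb_decide; ring.
  - cbn. repeat adjb_decide. ring.
Qed.

Lemma Lap_hub :
  Lap p v 0 = zsum (zrange (1 - Z.of_nat p) (-1)) (fun j => v 0%Z - v j) + (v 0%Z - v 1%Z).
Proof.
  rewrite Lap_zsum, window_low, zsum_app by lia. f_equal.
  - apply zsum_ext. intros j Hj. apply in_zrange in Hj. adjb_decide.
  - cbn. repeat adjb_decide. ring.
Qed.

Lemma Lap_path n :
  Lap p v (Z.of_nat (S n)) = 2 * v (Z.of_nat (S n)) - v (Z.of_nat n) - v (Z.of_nat (S (S n))).
Proof.
  rewrite Lap_zsum, window_high, zsum_app by lia.
  rewrite (zsum_const _ _ 0).
  2:{ intros j Hj. apply in_zrange in Hj. adjb_decide. }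
  cbn [zsum map fold_right]. repeat adjb_decide.
  replace (Z.of_nat (S n) - 1)%Z with (Z.of_nat n) by lia.
  replace (Z.of_nat (S n) + 1)%Z with (Z.of_nat (S (S n))) by lia. ring.
Qed.

End LaplacianAtVertex.

Section CliqueConstant.
Variable p : nat.
Hypothesis p_ge2 : (2 <= p)%nat.
Variables (v : Z -> R) (a lam : R).
Hypothesis v_clique : forall j, (1 - Z.of_nat p <= j <= -1)%Z -> v j = a.

Lemma zsum_clique_const x :
  zsum (zrange (1 - Z.of_nat p) (-1)) (fun j => x - v j) = (INR p - 1) * (x - a).
Proof.
  rewrite (zsum_const _ _ (x - a)).
  - rewrite length_zrange. replace (Z.to_nat (-1 - (1 - Z.of_nat p) + 1)) with (p - 1)%nat by lia.
    rewrite minus_INR by lia. simpl. ring.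
  - intros j Hj. apply in_zrange in Hj. rewrite v_clique by lia. reflexivity.
Qed.

Lemma eigen_equations_clique_const :
  (forall i, is_vertex p i -> Lap p v i = lam * v i) <->
  v 0%Z = (1 - lam) * a /\
  (INR p - 1) * (v 0%Z - a) + (v 0%Z - v 1%Z) = lam * v 0%Z /\
  (forall n, v (Z.of_nat (S (S n))) = (2 - lam) * v (Z.of_nat (S n)) - v (Z.of_nat n)).
Proof.
  assert (p_pos : (1 <= p)%nat) by lia.
  split.
  - intros Heig. split; [|split].
    + pose proof (Heig (-1)%Z ltac:(unfold is_vertex; lia)) as H.
      rewrite Lap_clique, zsum_clique_const, v_clique in H by lia. lra.
    + pose proof (Heig 0%Z ltac:(unfold is_vertex; lia)) as H.
      rewrite Lap_hub, zsum_clique_const in H by lia. exact H.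
    + intros n. pose proof (Heig (Z.of_nat (S n)) ltac:(unfold is_vertex; lia)) as H.
      rewrite Lap_path in H by lia. lra.
  - intros (Hc & Hh & Hp) i Hi. unfold is_vertex in Hi.
    destruct (Z_lt_le_dec i 0) as [Hneg|Hnn].
    + rewrite Lap_clique, zsum_clique_const, v_clique by lia. lra.
    + destruct (Z.eq_dec i 0) as [->|Hne].
      * rewrite Lap_hub, zsum_clique_const by lia. exact Hh.
      * replace i with (Z.of_nat (S (Z.to_nat (i - 1)))) by lia.
        rewrite Lap_path by lia. rewrite Hp. ring.
Qed.

End CliqueConstant.

Lemma is_series_finite_support (a : nat -> R) N :
  (forall n, (N < n)%nat -> a n = 0) -> is_series a (sum_n a N).
Proof.
  intros H. apply (filterlim_ext_loc (fun _ => sum_n a N)); [|apply filterlim_const].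
  exists N. intros n Hn. induction n as [|n IH].
  - replace N with 0%nat by lia. reflexivity.
  - destruct (Nat.eq_dec N (S n)) as [->|]; [reflexivity|].
    rewrite sum_Sn, <- IH, H by lia. unfold plus; simpl. lra.
Qed.

Lemma sum_n_fold_right (a : nat -> R) N :
  sum_n a N = fold_right Rplus 0 (map a (seq 0 (S N))).
Proof.
  induction N as [|N IH].
  - rewrite sum_O. simpl. lra.
  - rewrite sum_Sn, IH, (seq_S (S N)), map_app, fold_right_app.
    generalize (map a (seq 0 (S N))) as s. intros s. unfold plus; cbn.
    induction s as [|x s IHs]; simpl; lra.
Qed.

Lemma is_series_clique_supported p g : (2 <= p)%nat ->
  (forall i, ~ (1 - Z.of_nat p <= i <= -1)%Z -> g i = 0) ->
  is_series (fun n => g (vtx p n)) (zsum (zrange (1 - Z.of_nat p) (-1)) g).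
Proof.
  intros Hp g_supp. replace (zsum _ g) with (sum_n (fun n => g (vtx p n)) (p - 2)).
  - apply is_series_finite_support. intros n Hn. apply g_supp. unfold vtx. lia.
  - rewrite sum_n_fold_right. unfold zsum, zrange. rewrite map_map.
    replace (Z.to_nat (-1 - (1 - Z.of_nat p) + 1)) with (S (p - 2)) by lia. reflexivity.
Qed.

Lemma inner_clique_supported p v w : (2 <= p)%nat ->
  (forall i, ~ (1 - Z.of_nat p <= i <= -1)%Z -> w i = 0) ->
  inner p v w = zsum (zrange (1 - Z.of_nat p) (-1)) (fun j => v j * w j).
Proof.
  intros Hp Hw. apply is_series_unique, (is_series_clique_supported p (fun j => v j * w j) Hp).
  intros i Hi. rewrite Hw by exact Hi. ring.
Qed.

Lemma l2_clique_supported p w : (2 <= p)%nat ->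
  (forall i, ~ (1 - Z.of_nat p <= i <= -1)%Z -> w i = 0) -> l2 p w.
Proof.
  intros Hp Hw. split.
  - intros i Hi. apply Hw. unfold is_vertex in Hi. lia.
  - eexists. apply (is_series_clique_supported p (fun j => w j ^ 2) Hp).
    intros i Hi. rewrite Hw by exact Hi. ring.
Qed.

Lemma in_EK_zdelta_sub p k : (2 <= p)%nat -> (1 - Z.of_nat p <= k <= -1)%Z ->
  in_EK p (fun j => zdelta (-1) j - zdelta k j).
Proof.
  intros Hp Hk.
  assert (Hsupp : forall i, ~ (1 - Z.of_nat p <= i <= -1)%Z -> zdelta (-1) i - zdelta k i = 0).
  { intros i Hi. unfold zdelta. destruct (Z.eqb_spec i (-1)), (Z.eqb_spec i k); lia || ring. }
  split; [|split]; [apply l2_clique_supported; auto | exact Hsupp |].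
  change (zsum (zrange (1 - Z.of_nat p) (-1)) (fun j => zdelta (-1) j - zdelta k j) = 0).
  rewrite zsum_minus.
  rewrite (zsum_ext _ (zdelta (-1)) (fun j => 1 * zdelta (-1) j)) by (intros; ring).
  rewrite (zsum_ext _ (zdelta k) (fun j => 1 * zdelta k j)) by (intros; ring).
  rewrite !zsum_mul_zdelta by lia. ring.
Qed.

Lemma EK_perp_clique_const p v : (2 <= p)%nat -> in_EK_perp p v ->
  forall k, (1 - Z.of_nat p <= k <= -1)%Z -> v k = v (-1)%Z.
Proof.
  intros Hp [_ Hperp] k Hk.
  pose proof (in_EK_zdelta_sub p k Hp Hk) as Hw.
  pose proof (Hperp _ Hw) as H.
  rewrite inner_clique_supported in H by (exact Hp || apply Hw).
  rewrite (zsum_ext _ _ (fun j => v j * zdelta (-1) j - v j * zdelta k j)) in H by (intros; ring).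
  rewrite zsum_minus, !zsum_mul_zdelta in H by lia. lra.
Qed.

Lemma clique_const_EK_perp p v a : (2 <= p)%nat -> l2 p v ->
  (forall k, (1 - Z.of_nat p <= k <= -1)%Z -> v k = a) -> in_EK_perp p v.
Proof.
  intros Hp Hv Hconst. split; [exact Hv|]. intros w (_ & Hsupp & Hsum).
  rewrite inner_clique_supported by auto.
  rewrite (zsum_ext _ _ (fun j => a * w j)), zsum_scal_l.
  - change (a * fold_right Rplus 0 (map w (zrange (1 - Z.of_nat p) (-1))) = 0).
    rewrite Hsum. ring.
  - intros j Hj. apply in_zrange in Hj. rewrite Hconst by lia. reflexivity.
Qed.

Definition sigma_minus (lam : R) : R :=
  ((2 - lam) - sqrt ((2 - lam)^2 - 4)) / 2.

Lemma sigma_plus_add_minus lam : sigma_plus lam + sigma_minus lam = 2 - lam.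
Proof. unfold sigma_plus, sigma_minus. lra. Qed.

Lemma sigma_plus_mul_minus lam : 4 <= lam -> sigma_plus lam * sigma_minus lam = 1.
Proof.
  intros H. unfold sigma_plus, sigma_minus.
  pose proof (sqrt_sqrt ((2 - lam)^2 - 4) ltac:(nra)). nra.
Qed.

Lemma sigma_minus_le lam : sigma_minus lam <= 1 - lam / 2.
Proof. unfold sigma_minus. pose proof (sqrt_pos ((2 - lam)^2 - 4)). lra. Qed.

Lemma sigma_plus_bounds lam : 4 <= lam -> -1 <= sigma_plus lam < 0.
Proof.
  intros H. pose proof (sigma_plus_mul_minus lam H). pose proof (sigma_minus_le lam).
  split; nra.
Qed.

Lemma sigma_plus_gt_m1 lam : 4 < lam -> -1 < sigma_plus lam.
Proof.
  intros H. pose proof (sigma_plus_mul_minus lam ltac:(lra)). pose proof (sigma_minus_le lam).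
  nra.
Qed.

Lemma sigma_plus_sqr lam : 4 <= lam -> sigma_plus lam ^ 2 = (2 - lam) * sigma_plus lam - 1.
Proof.
  intros H. rewrite <- (sigma_plus_mul_minus lam H), <- (sigma_plus_add_minus lam). ring.
Qed.

Lemma sigma_plus_le l1 l2 : 4 <= l1 <= l2 -> sigma_plus l1 <= sigma_plus l2.
Proof.
  intros H.
  assert (Hm : sigma_minus l2 <= sigma_minus l1).
  { unfold sigma_minus.
    assert (sqrt ((2 - l1)^2 - 4) <= sqrt ((2 - l2)^2 - 4)) by (apply sqrt_le_1_alt; nra).
    lra. }
  pose proof (sigma_plus_mul_minus l1 ltac:(lra)) as H1.
  pose proof (sigma_plus_mul_minus l2 ltac:(lra)) as H2.
  pose proof (sigma_plus_bounds l1 ltac:(lra)). pose proof (sigma_plus_bounds l2 ltac:(lra)).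
  assert (E : sigma_plus l2 - sigma_plus l1
              = sigma_plus l1 * sigma_plus l2 * (sigma_minus l1 - sigma_minus l2)).
  { transitivity (sigma_plus l2 * (sigma_plus l1 * sigma_minus l1)
                  - sigma_plus l1 * (sigma_plus l2 * sigma_minus l2)); [rewrite H1, H2|]; ring. }
  assert (0 <= sigma_plus l1 * sigma_plus l2 * (sigma_minus l1 - sigma_minus l2)).
  { apply Rmult_le_pos; nra. }
  lra.
Qed.

Lemma Ffun_pos p lam : (1 <= p)%nat -> 4 <= lam <= INR p -> 0 < Ffun p lam.
Proof.
  intros Hp H. pose proof (sigma_plus_bounds lam ltac:(lra)).
  assert (1 <= INR p) by (apply le_INR in Hp; simpl in Hp; lra).
  unfold Ffun. nra.
Qed.

Lemma Ffun_neg p lam : (2 <= p)%nat -> INR p + 2 <= lam -> Ffun p lam < 0.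
Proof.
  intros Hp H. assert (2 <= INR p) by (apply le_INR in Hp; simpl in Hp; lra).
  pose proof (sigma_plus_bounds lam ltac:(lra)).
  unfold Ffun. nra.
Qed.

Lemma Ffun_decreasing p l1 l2 : (4 <= p)%nat -> INR p <= l1 < l2 -> Ffun p l2 < Ffun p l1.
Proof.
  intros Hp H. assert (4 <= INR p) by (apply le_INR in Hp; simpl in Hp; lra).
  pose proof (sigma_plus_le l1 l2 ltac:(lra)). pose proof (sigma_plus_bounds l1 ltac:(lra)).
  (* [sigma_plus] is increasing with values in [-1, 0), so [(1 - l) * sigma_plus l] grows by at
     most [l2 - l1], while [-(p - l) * (1 - l)] drops by [(l2 - l1) * (l1 + l2 - p - 1)]. *)
  assert ((1 - l2) * sigma_plus l2 - (1 - l1) * sigma_plus l1 <= l2 - l1) by nra.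
  unfold Ffun. nra.
Qed.

Lemma Ffun_continuous p lam : 4 < lam -> continuity_pt (Ffun p) lam.
Proof.
  intros H. apply continuity_pt_filterlim, (ex_derive_continuous (V := R_NormedModule)).
  unfold Ffun, sigma_plus. auto_derive. nra.
Qed.

Lemma Ffun_unique_root p : (5 <= p)%nat ->
  exists! lam, INR p < lam < INR p + 2 /\ Ffun p lam = 0.
Proof.
  intros Hp. assert (5 <= INR p) by (apply le_INR in Hp; simpl in Hp; lra).
  pose proof (Ffun_pos p (INR p) ltac:(lia) ltac:(lra)) as Hlo.
  pose proof (Ffun_neg p (INR p + 2) ltac:(lia) ltac:(lra)) as Hhi.
  destruct (Ranalysis5.IVT_interv (fun x => - Ffun p x) (INR p) (INR p + 2))
    as [z [Hz Fz]]; [|lra|lra|lra|].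
  { intros x Hx. apply (continuity_pt_opp (Ffun p)), Ffun_continuous. lra. }
  assert (z <> INR p) by (intros ->; lra).
  assert (z <> INR p + 2) by (intros ->; lra).
  exists z. split; [split; lra|].
  intros y [Hy Fy]. destruct (Rtotal_order y z) as [Hlt|[Heq|Hgt]]; [|symmetry; exact Heq|].
  - pose proof (Ffun_decreasing p y z ltac:(lia) ltac:(lra)). lra.
  - pose proof (Ffun_decreasing p z y ltac:(lia) ltac:(lra)). lra.
Qed.

Lemma decaying_recurrence_solution (s t : R) (c : nat -> R) : 1 < Rabs t ->
  (forall n, c (S (S n)) = (s + t) * c (S n) - s * t * c n) ->
  is_lim_seq c 0 -> c 1%nat = s * c 0%nat.
Proof.
  intros Ht Hrec Hc.
  set (d n := c (S n) - s * c n).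
  assert (Hd : forall n, d n = t ^ n * d 0%nat).
  { induction n as [|n IH]; [simpl; ring|].
    unfold d in *. rewrite Hrec.
    transitivity (t * (c (S n) - s * c n)); [ring | rewrite IH; simpl; ring]. }
  assert (Hd0 : is_lim_seq (fun n => Rabs (d n)) 0).
  { apply -> is_lim_seq_abs_0.
    replace 0 with (0 - s * 0) by ring.
    apply is_lim_seq_minus'; [apply -> is_lim_seq_incr_1; exact Hc|].
    apply (is_lim_seq_scal_l _ s 0) in Hc. simpl in Hc. rewrite Rmult_0_r in *. exact Hc. }
  destruct (Req_dec (d 0%nat) 0) as [Hz|Hnz]; [unfold d in Hz; lra|].
  exfalso.
  assert (Hgeom : is_lim_seq (fun n => Rabs (d n) / Rabs (d 0%nat)) 0).
  { pose proof (is_lim_seq_div' _ _ _ _ Hd0 (is_lim_seq_const (Rabs (d 0%nat)))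
                  (Rabs_no_R0 _ Hnz)) as H.
    unfold Rdiv at 2 in H. rewrite Rmult_0_l in H. exact H. }
  apply (is_lim_seq_ext _ (fun n => Rabs t ^ n)) in Hgeom.
  - apply is_lim_seq_unique in Hgeom.
    rewrite (is_lim_seq_unique _ _ (is_lim_seq_geom_p _ Ht)) in Hgeom. discriminate.
  - intros n. rewrite Hd, Rabs_mult, RPow_abs. field. apply Rabs_no_R0. exact Hnz.
Qed.

Lemma l2_path_lim_0 p v : (1 <= p)%nat -> l2 p v -> is_lim_seq (fun n => v (Z.of_nat n)) 0.
Proof.
  intros Hp [_ Hsq]. apply ex_series_lim_0 in Hsq.
  apply (is_lim_seq_incr_n _ (p - 1)) in Hsq.
  apply (is_lim_seq_continuous sqrt _ 0 (continuity_pt_sqrt 0 (Rle_refl 0))) in Hsq.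
  rewrite sqrt_0 in Hsq. apply is_lim_seq_abs_0.
  refine (is_lim_seq_ext _ _ _ _ Hsq). intros n. cbv beta.
  rewrite <- sqrt_Rsqr_abs. unfold Rsqr. f_equal.
  replace (vtx p (n + (p - 1))) with (Z.of_nat n) by (unfold vtx; lia). ring.
Qed.

Section Eigenvector.
Variables (p : nat) (lam : R).

Definition eigvec (i : Z) : R :=
  if (i <? 1 - Z.of_nat p)%Z then 0
  else if (i <? 0)%Z then 1
  else (1 - lam) * sigma_plus lam ^ Z.to_nat i.

Lemma eigvec_clique i : (1 - Z.of_nat p <= i <= -1)%Z -> eigvec i = 1.
Proof.
  intros. unfold eigvec.
  destruct (Z.ltb_spec i (1 - Z.of_nat p)), (Z.ltb_spec i 0); lia || reflexivity.
Qed.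

Hypothesis p_ge2 : (2 <= p)%nat.
Hypothesis lam_gt4 : 4 < lam.

Lemma eigvec_path n : eigvec (Z.of_nat n) = (1 - lam) * sigma_plus lam ^ n.
Proof.
  unfold eigvec. rewrite Nat2Z.id.
  destruct (Z.ltb_spec (Z.of_nat n) (1 - Z.of_nat p)), (Z.ltb_spec (Z.of_nat n) 0);
    lia || reflexivity.
Qed.

Lemma eigvec_l2 : l2 p eigvec.
Proof.
  split.
  - intros i Hi. unfold is_vertex in Hi. unfold eigvec.
    destruct (Z.ltb_spec i (1 - Z.of_nat p)); lia || reflexivity.
  - apply (ex_series_incr_n _ (p - 1)).
    apply (ex_series_ext (fun k => scal ((1 - lam)^2) ((sigma_plus lam ^ 2) ^ k))).
    + intros k. replace (vtx p (p - 1 + k)) with (Z.of_nat k) by (unfold vtx; lia).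
      rewrite eigvec_path, <- pow_mult, Nat.mul_comm, pow_mult.
      unfold scal; simpl; unfold mult; simpl. ring.
    + apply (ex_series_scal_l (V := R_NormedModule)), ex_series_geom.
      pose proof (sigma_plus_bounds lam ltac:(lra)). pose proof (sigma_plus_gt_m1 lam lam_gt4).
      rewrite Rabs_right by nra. nra.
Qed.

Lemma eigvec_eigen : Ffun p lam = 0 ->
  forall i, is_vertex p i -> Lap p eigvec i = lam * eigvec i.
Proof.
  intros HF. apply (eigen_equations_clique_const p p_ge2 eigvec 1 lam eigvec_clique).
  change 0%Z with (Z.of_nat 0). change 1%Z with (Z.of_nat 1). rewrite !eigvec_path.
  split; [|split].
  - simpl. ring.
  - unfold Ffun in HF. simpl. lra.
  - intros n. rewrite !eigvec_path. simpl.
    pose proof (sigma_plus_sqr lam ltac:(lra)) as Hsq. simpl in Hsq.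
    transitivity ((1 - lam) * sigma_plus lam ^ n * (sigma_plus lam * (sigma_plus lam * 1)));
      [ring | rewrite Hsq; ring].
Qed.

End Eigenvector.

Lemma Ffun_root_eig_EKperp p lam : (2 <= p)%nat -> 4 < lam -> Ffun p lam = 0 ->
  eig_EKperp p lam.
Proof.
  intros Hp Hlam HF. exists (eigvec p lam). split; [|split; [|split]].
  - apply eigvec_l2; assumption.
  - exists (-1)%Z. rewrite eigvec_clique by lia. lra.
  - apply (clique_const_EK_perp p _ 1 Hp (eigvec_l2 p lam Hp Hlam)).
    apply eigvec_clique.
  - exact (eigvec_eigen p lam Hp Hlam HF).
Qed.

Lemma eig_EKperp_Ffun_root p lam : (2 <= p)%nat -> 4 < lam -> eig_EKperp p lam ->
  Ffun p lam = 0.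
Proof.
  intros Hp Hlam (v & Hl2 & [i Hi] & Hperp & Heig).
  set (a := v (-1)%Z).
  pose proof (EK_perp_clique_const p v Hp Hperp) as Hconst.
  destruct (proj1 (eigen_equations_clique_const p Hp v a lam Hconst) Heig)
    as (H0 & Hhub & Hrec).
  assert (Hdecay : v 1%Z = sigma_plus lam * v 0%Z).
  { apply (decaying_recurrence_solution _ (sigma_minus lam) (fun n => v (Z.of_nat n))).
    - pose proof (sigma_minus_le lam). rewrite Rabs_left; lra.
    - intros n. rewrite sigma_plus_add_minus, sigma_plus_mul_minus by lra. rewrite Hrec. ring.
    - apply (l2_path_lim_0 p); [lia | exact Hl2]. }
  assert (HFa : Ffun p lam * a = 0).
  { transitivity (lam * v 0%Z - (INR p - 1) * (v 0%Z - a) - (v 0%Z - v 1%Z)); [|lra].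
    rewrite Hdecay, H0. unfold Ffun. ring. }
  destruct (Req_dec a 0) as [Ha|Ha]; [exfalso|nra].
  assert (Hpath : forall n, v (Z.of_nat n) = 0 /\ v (Z.of_nat (S n)) = 0).
  { induction n as [|n [IH1 IH2]].
    - simpl. rewrite Hdecay, H0, Ha. split; ring.
    - split; [exact IH2|]. rewrite Hrec, IH1, IH2. ring. }
  apply Hi. destruct (Z_lt_le_dec i (1 - Z.of_nat p)) as [Hout|Hin].
  - apply (proj1 Hl2). unfold is_vertex. lia.
  - destruct (Z_lt_le_dec i 0).
    + rewrite Hconst by lia. exact Ha.
    + replace i with (Z.of_nat (Z.to_nat i)) by lia. apply Hpath.
Qed.

Theorem proposition4 (p : nat) (hp : (5 <= p)%nat) :
  (forall lam : R, 4 < lam -> (eig_EKperp p lam <-> Ffun p lam = 0)) /\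
  (exists! lam : R, INR p < lam < INR p + 2 /\ Ffun p lam = 0) /\
  (forall lam : R, (4 < lam <= INR p \/ INR p + 2 <= lam) -> Ffun p lam <> 0).
Proof.
  split; [|split].
  - intros lam Hlam. split.
    + apply eig_EKperp_Ffun_root; [lia | exact Hlam].
    + apply Ffun_root_eig_EKperp; [lia | exact Hlam].
  - apply Ffun_unique_root, hp.
  - intros lam [Hlow | Hhigh].
    + apply Rgt_not_eq, Ffun_pos; [lia | lra].
    + apply Rlt_not_eq, Ffun_neg; [lia | exact Hhigh].
Qed.
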